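(* If $S(A)=(a_n)$ is a regular Stanley sequence, then there is a unique choice of constants $\lambda,\sigma$ and independent Stanley sequence $(a'_n)$ such that $(a'_n)$ has character $\lambda$ and, for all sufficiently large $k$ and all $0\le i<2^k$, $a_{2^k-\sigma+i}=a_{2^k-\sigma}+a'_i$ and $a_{2^k-\sigma}=2a_{2^k-\sigma-1}-\lambda+1$.
   Context: A set of non-negative integers is 3-free if no three of its elements form an arithmetic progression. For a finite 3-free set $A=\{a_0<\cdots<a_k\}$ of non-negative integers, the Stanley sequence $S(A)=(a_n)_{n\ge0}$ is the increasing sequence with initial terms $a_0,\ldots,a_k$ in which each subsequent $a_{n+1}$ is the smallest integer greater than $a_n$ such that $\{a_0,\ldots,a_{n+1}\}$ is 3-free. Throughout, Stanley sequences are in root position ($a_0=0$). A Stanley sequence $(a_n)$ is independent with character $\lambda$ if for all sufficiently large $k$: $a_{2^k+i}=a_{2^k}+a_i$ for $0\le i<2^k$, and $a_{2^k}=2a_{2^k-1}-\lambda+1$ (the constant $\lambda$ is then unique). A Stanley sequence $(a_n)$ is regular if there exist constants $\lambda,\sigma$ and an independent Stanley sequence $(a'_n)$ of character $\lambda$ such that for all large $k$ and $0\le i<2^k$: $a_{2^k-\sigma+i}=a_{2^k-\sigma}+a'_i$ and $a_{2^k-\sigma}=2a_{2^k-\sigma-1}-\lambda+1$. *)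

From mathcomp Require Import all_boot all_order all_algebra.
Set Implicit Arguments. Unset Strict Implicit. Unset Printing Implicit Defensive.
Import Order.TTheory GRing.Theory Num.Theory.

Definition three_free (P : nat -> Prop) : Prop :=
  forall x y z : nat, P x -> P y -> P z -> x < y -> y < z -> x + z <> 2 * y.

Definition prefix_set (a : nat -> nat) (n : nat) : nat -> Prop :=
  fun x => exists i, i <= n /\ a i = x.

(* a is a Stanley sequence in root position: a = S(A) for the finite 3-free
   set A = {a_0 < ... < a_k} with a_0 = 0, i.e. a is increasing, starts at 0,
   its first k+1 terms form a 3-free set, and each subsequent term is the
   least integer greater than the previous one keeping the set 3-free. *)
Definition stanley (a : nat -> nat) : Prop :=
  [/\ a 0 = 0,
      (forall n, a n < a n.+1) &
      exists k, three_free (prefix_set a k) /\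
        forall n, k <= n ->
          three_free (prefix_set a n.+1) /\
          forall m, a n < m -> m < a n.+1 ->
            ~ three_free (fun x => prefix_set a n x \/ x = m)].

Definition independent_char (a : nat -> nat) (lam : int) : Prop :=
  exists K, forall k, K <= k ->
    (forall i, i < 2 ^ k -> a (2 ^ k + i) = a (2 ^ k) + a i) /\
    Posz (a (2 ^ k)) = (2 * Posz (a (2 ^ k).-1) - lam + 1)%R.

(* Index 2^k - sigma (sigma an integer constant; for large k this is positive). *)
Definition shift_idx (sigma : int) (k : nat) : nat := absz (Posz (2 ^ k) - sigma)%R.

Definition regular_data (a : nat -> nat) (lam sigma : int) (a' : nat -> nat) : Prop :=
  [/\ stanley a', independent_char a' lam &
      exists K, forall k, K <= k ->
        (forall i, i < 2 ^ k ->
           a (shift_idx sigma k + i) = a (shift_idx sigma k) + a' i) /\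
        Posz (a (shift_idx sigma k)) =
          (2 * Posz (a (shift_idx sigma k).-1) - lam + 1)%R].

Definition regular (a : nat -> nat) : Prop :=
  exists lam sigma a', regular_data a lam sigma a'.

(* If two regular data (lam, sigma, a') and (lam2, sigma2, a2) had
   sigma2 < sigma, put d := sigma - sigma2 and s_k := 2^k - sigma.  Then
   2^k - sigma2 = s_k + d, so the block structure at s_k gives
   a(s_k + d) = a(s_k) + a'(d) and a(s_k + d - 1) = a(s_k) + a'(d - 1), while
   the character equation at s_k + d reads a(s_k + d) = 2 a(s_k + d - 1) - lam2 + 1.
   Together they pin a(s_k) to the constant a'(d) - 2 a'(d - 1) + lam2 - 1 for
   all large k, contradicting that a is increasing and s_k < s_(k+1).  Hence
   sigma is unique; lam is then read off the character equation and a' off the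
   block structure a(s_k + i) = a(s_k) + a'(i). *)
From mathcomp Require Import all_boot all_order all_algebra.
From mathcomp Require Import zify.
Import Order.TTheory GRing.Theory Num.Theory.

Set Implicit Arguments. Unset Strict Implicit. Unset Printing Implicit Defensive.

Lemma ltn_exp2 (B k : nat) : (B <= k)%N -> (B < 2 ^ k)%N.
Proof.
move=> le_Bk; apply: (leq_trans (ltn_expl B (isT : 1 < 2))).
by rewrite leq_exp2l.
Qed.

Lemma shift_idxE (sigma : int) (k : nat) : (`|sigma|%N < 2 ^ k)%N ->
  Posz (shift_idx sigma k) = (Posz (2 ^ k) - sigma)%R.
Proof. rewrite /shift_idx; lia. Qed.

Lemma shift_idx_ltnS (sigma : int) (k : nat) : (`|sigma|%N < 2 ^ k)%N ->
  (shift_idx sigma k < shift_idx sigma k.+1)%N.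
Proof.
move=> lt_sigma; have lt_sigmaS : (`|sigma|%N < 2 ^ k.+1)%N.
  by apply: (leq_trans lt_sigma); rewrite leq_exp2l.
have := shift_idxE lt_sigma; have := shift_idxE lt_sigmaS.
rewrite expnS; lia.
Qed.

Lemma shift_idx_addn (sigma : int) (d k : nat) :
  (`|(sigma + Posz d)%R|%N < 2 ^ k)%N ->
  shift_idx sigma k = (shift_idx (sigma + Posz d)%R k + d)%N.
Proof. by move=> /shift_idxE; rewrite /shift_idx; lia. Qed.

Section RegularDataUnique.

Variable a : nat -> nat.
Hypothesis a_incr : forall n, (a n < a n.+1)%N.

Lemma shift_value_not_eventually_const (sigma c : int) (B : nat) :
  ~ (forall k, (B <= k)%N -> Posz (a (shift_idx sigma k)) = c).
Proof.
move=> const; set k := maxn B `|sigma|%N.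
have lt_shift : (shift_idx sigma k < shift_idx sigma k.+1)%N.
  by apply/shift_idx_ltnS/ltn_exp2; rewrite leq_maxr.
have le_Bk : (B <= k)%N by rewrite leq_maxl.
have := homo_ltn ltn_trans a_incr lt_shift.
by rewrite -ltz_nat !const ?ltxx // leqW.
Qed.

Lemma regular_data_shift_value_const (lam sigma lam2 sigma2 : int)
    (a' a2 : nat -> nat) :
  regular_data a lam sigma a' -> regular_data a lam2 sigma2 a2 ->
  (sigma2 < sigma)%R ->
  exists (c : int) (B : nat),
    forall k, (B <= k)%N -> Posz (a (shift_idx sigma k)) = c.
Proof.
move=> [_ _ [K1 block1]] [_ _ [K2 block2]] lt_sigma.
have [d d_gt0 sigma_eq] : exists2 d : nat, (0 < d)%N & sigma = (sigma2 + Posz d)%R.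
  by exists `|sigma - sigma2|%N; lia.
subst sigma.
exists (Posz (a' d) - 2 * Posz (a' d.-1) + lam2 - 1)%R.
exists (maxn (maxn K1 K2) (`|(sigma2 + Posz d)%R|%N + d).+1) => k le_k.
have lt_k := ltn_exp2 le_k.
have [tail1 _] := block1 k ltac:(lia); have [_ char2] := block2 k ltac:(lia).
have shift2 := @shift_idx_addn sigma2 d k ltac:(lia).
have pred_shift2 : (shift_idx sigma2 k).-1 = (shift_idx (sigma2 + Posz d)%R k + d.-1)%N.
  by rewrite shift2; lia.
have := tail1 d ltac:(lia); have := tail1 d.-1 ltac:(lia).
rewrite -shift2 -pred_shift2; lia.
Qed.

Lemma regular_data_sigma_le (lam sigma lam2 sigma2 : int) (a' a2 : nat -> nat) :
  regular_data a lam sigma a' -> regular_data a lam2 sigma2 a2 ->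
  (sigma <= sigma2)%R.
Proof.
move=> reg reg2; rewrite leNgt; apply/negP => lt_sigma.
have [c [B const]] := regular_data_shift_value_const reg reg2 lt_sigma.
exact: shift_value_not_eventually_const const.
Qed.

End RegularDataUnique.

Lemma regular_data_same_shift (a : nat -> nat) (lam lam2 sigma : int)
    (a' a2 : nat -> nat) :
  regular_data a lam sigma a' -> regular_data a lam2 sigma a2 ->
  lam2 = lam /\ a2 =1 a'.
Proof.
move=> [_ _ [K1 block1]] [_ _ [K2 block2]]; split.
  have [_ char1] := block1 _ (leq_maxl K1 K2).
  have [_ char2] := block2 _ (leq_maxr K1 K2).
  lia.
move=> n; set k := maxn (maxn K1 K2) n.
have lt_n : (n < 2 ^ k)%N by apply: ltn_exp2; rewrite leq_maxr.
have [tail1 _] := block1 k ltac:(lia); have [tail2 _] := block2 k ltac:(lia).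
by apply/eqP; rewrite -(eqn_add2l (a (shift_idx sigma k))) -tail1 // -tail2.
Qed.

Theorem mainTheorem7 (a : nat -> nat) :
  stanley a -> regular a ->
  exists (lam sigma : int) (a' : nat -> nat),
    regular_data a lam sigma a' /\
    forall (lam2 sigma2 : int) (a2 : nat -> nat),
      regular_data a lam2 sigma2 a2 ->
      [/\ lam2 = lam, sigma2 = sigma & forall n, a2 n = a' n].
Proof.
move=> [_ a_incr _] [lam [sigma [a' reg]]].
exists lam, sigma, a'; split=> // lam2 sigma2 a2 reg2.
have sigma_eq : sigma2 = sigma.
  apply/eqP; rewrite eq_le.
  by rewrite (regular_data_sigma_le a_incr reg reg2)
             (regular_data_sigma_le a_incr reg2 reg).
subst sigma2; have [lam_eq a2_eq] := regular_data_same_shift reg reg2.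
by split.
Qed.
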